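(* Fix an $s \times t$ matrix $A$. There exists a polynomial $p$ (depending only on $A$) such that for every $\epsilon > 0$, with $\delta = 1/p(\epsilon^{-1})$: if an $s \times n$ matrix $T$ contains $\epsilon n$ pairwise-disjoint copies of $A$, then the total number of copies of $A$ in $T$ is at least $\delta n^t$.
   Context: Matrices have ordered rows and columns. A copy of $A$ in $T$ is an $s\times t$ submatrix of $T$ (obtained by selecting $t$ columns $c_1<\dots<c_t$, keeping all $s$ rows, in order) equal to $A$; copies are pairwise disjoint if no entry of $T$ lies in two of them. *)

From HB Require Import structures.
From mathcomp Require Import all_boot all_order all_algebra.
Set Implicit Arguments. Unset Strict Implicit. Unset Printing Implicit Defensive.
Import Order.TTheory GRing.Theory Num.Theory.

Definition incr_sel (t n : nat) (f : {ffun 'I_t -> 'I_n}) : bool :=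
  [forall j1 : 'I_t, forall j2 : 'I_t, (j1 < j2)%N ==> (f j1 < f j2)%N].

Definition is_copy (T : eqType) (s t n : nat) (A : 'M[T]_(s, t)) (M : 'M[T]_(s, n))
    (f : {ffun 'I_t -> 'I_n}) : bool :=
  incr_sel f && [forall i : 'I_s, forall j : 'I_t, M i (f j) == A i j].

Definition copies (T : eqType) (s t n : nat) (A : 'M[T]_(s, t)) (M : 'M[T]_(s, n))
  : {set {ffun 'I_t -> 'I_n}} := [set f | is_copy A M f].

Definition copy_entries (s t n : nat) (f : {ffun 'I_t -> 'I_n})
  : {set 'I_s * 'I_n} := [set (i, f j) | i : 'I_s, j : 'I_t].

Definition pairwise_disjoint (s t n : nat) (C : {set {ffun 'I_t -> 'I_n}}) : Prop :=
  forall f g, f \in C -> g \in C -> f != g ->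
    [disjoint copy_entries s f & copy_entries s g].

From HB Require Import structures.
From mathcomp Require Import all_boot all_order all_algebra.
From mathcomp Require Import zify lra.
Set Implicit Arguments. Unset Strict Implicit. Unset Printing Implicit Defensive.

(* Disjoint copies of A (for s > 0) never use the same column at the same position j.
   Among m t such copies choose greedily blocks B_0, ..., B_(t-1) of m copies each, B_j
   consisting of the m remaining copies whose j-th column is leftmost.  For any choice
   c_j in B_j the columns c_0(0), ..., c_(t-1)(t-1) form a copy of A, because
   c_j(j) <= c_(j+1)(j) < c_(j+1)(j+1), and distinct choices give distinct copies.
   Hence eps n disjoint copies yield at least (eps n / 2t)^t copies, and
   p(x) = (2t)^(2t) (x^t + 1) works.  For s = 0 disjointness is vacuous, but then every
   increasing selection is a copy and the n/t blocks of consecutive columns give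
   n^t <= (2t)^(2t) #copies directly. *)

Section Lowest.
Variables (aT : finType) (key : aT -> nat).

Let key_le : rel aT := fun x y => key x <= key y.

Definition lowest (X : {set aT}) (m : nat) : {set aT} :=
  [set x in take m (sort key_le (enum X))].

Lemma lowest_sub (X : {set aT}) m : lowest X m \subset X.
Proof.
by apply/subsetP => x; rewrite inE => /mem_take; rewrite mem_sort mem_enum.
Qed.

Lemma card_lowest (X : {set aT}) m : m <= #|X| -> #|lowest X m| = m.
Proof.
move=> mX; rewrite cardsE (card_uniqP _); last first.
  by rewrite take_uniq ?sort_uniq ?enum_uniq.
by rewrite size_take size_sort -cardE; case: ltngtP mX.
Qed.

Lemma lowest_le (X : {set aT}) m x y :
  x \in lowest X m -> y \in X :\: lowest X m -> key x <= key y.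
Proof.
set s := sort key_le (enum X).
have key_le_tr : transitive key_le by move=> ? ? ?; apply: leq_trans.
have : pairwise key_le (take m s ++ drop m s).
  by rewrite cat_take_drop -sorted_pairwise // sort_sorted // => ? ?; apply: leq_total.
rewrite pairwise_cat => /and3P[/allrelP sep _ _].
rewrite !inE => xl /andP[yNl yX]; apply: sep => //.
have : y \in take m s ++ drop m s by rewrite cat_take_drop mem_sort mem_enum.
by rewrite mem_cat (negbTE yNl).
Qed.

End Lowest.

Section GreedyBlocks.
Variables (T : eqType) (s t' n : nat) (A : 'M[T]_(s, t'.+1)) (M : 'M[T]_(s, n)).
Local Notation t := t'.+1.
Local Notation selT := {ffun 'I_t -> 'I_n}.
Variable C : {set selT}.
Hypothesis C_copy : forall f, f \in C -> is_copy A M f.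
Hypothesis C_inj : forall j, {in C &, injective (fun f : selT => f j)}.
Variable m : nat.
Hypothesis mt_le_C : m * t <= #|C|.

Definition column (j : nat) (f : selT) : nat := f (inord j).

Fixpoint rest (j : nat) : {set selT} :=
  if j is j'.+1 then rest j' :\: lowest (column j') (rest j') m else C.

Definition block (j : nat) : {set selT} := lowest (column j) (rest j) m.

Lemma rest_mono i j : i <= j -> rest j \subset rest i.
Proof.
move/subnK <-; elim: (j - i) => [|k IH] //.
by rewrite addSn /=; apply: subset_trans (subsetDl _ _) IH.
Qed.

Lemma block_sub j : block j \subset C.
Proof. exact: subset_trans (lowest_sub _ _ _) (rest_mono (leq0n j)). Qed.

Lemma card_rest j : j <= t -> #|rest j| = #|C| - j * m.
Proof.
elim: j => [|j IH] jt; first by rewrite subn0.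
have m_le_rest : m <= #|rest j|.
  rewrite IH ?(ltnW jt) //; move: (leq_trans (leq_mul (leqnn m) jt) mt_le_C).
  rewrite mulnS mulnC; lia.
rewrite /= cardsD (setIidPr (lowest_sub _ _ _)) card_lowest // IH ?(ltnW jt) //.
by rewrite mulSn addnC subnDA.
Qed.

Lemma card_block j : j < t -> #|block j| = m.
Proof.
move=> jt; apply: card_lowest; rewrite card_rest ?(ltnW jt) //.
by move: mt_le_C (leq_mul (leqnn m) jt); nia.
Qed.

Lemma block_column_le j1 j2 c d :
  j1 < j2 -> c \in block j1 -> d \in block j2 -> column j1 c <= column j1 d.
Proof.
move=> lt_j12 c_j1 d_j2; apply: lowest_le c_j1 _.
by apply: subsetP (rest_mono lt_j12) _ (subsetP (lowest_sub _ _ _) _ d_j2).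
Qed.

Definition diag (phi : {dffun 'I_t -> selT}) : selT := [ffun j => phi j j].

Local Notation blocks := (setXn (fun j : 'I_t => block j)).

Lemma diag_copy phi : phi \in blocks -> is_copy A M (diag phi).
Proof.
move/setXnP => phi_blocks; apply/andP; split.
  apply/forallP => j1; apply/forallP => j2; apply/implyP => lt_j12; rewrite !ffunE.
  have := block_column_le lt_j12 (phi_blocks j1) (phi_blocks j2).
  rewrite /column !inord_val => /leq_ltn_trans; apply.
  have /andP[/forallP/(_ j1)/forallP/(_ j2)/implyP incr _] :=
    C_copy (subsetP (block_sub j2) _ (phi_blocks j2)).
  exact: incr.
apply/forallP => i; apply/forallP => j; rewrite ffunE.
have /andP[_ /forallP/(_ i)/forallP/(_ j)//] :=
  C_copy (subsetP (block_sub j) _ (phi_blocks j)).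
Qed.

Lemma diag_inj : {in blocks &, injective diag}.
Proof.
move=> phi psi /setXnP phi_blocks /setXnP psi_blocks eq_diag; apply/ffunP => j.
apply: (@C_inj j); rewrite ?(subsetP (block_sub j)) //.
by have := congr1 (fun f : selT => f j) eq_diag; rewrite !ffunE.
Qed.

Lemma exp_le_card_copies : m ^ t <= #|copies A M|.
Proof.
have -> : m ^ t = #|diag @: blocks|.
  rewrite card_in_imset; last exact: diag_inj.
  rewrite cardsXn (eq_bigr (fun _ => m)) => [|j _]; last exact: card_block.
  by rewrite prod_nat_const card_ord.
apply/subset_leq_card/subsetP => _ /imsetP[phi phi_blocks ->].
by rewrite inE diag_copy.
Qed.

End GreedyBlocks.

Lemma leq_double_divn d m : 0 < d -> d <= m -> m <= 2 * d * (m %/ d).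
Proof.
move=> d_gt0 d_le_m; have := ltn_ceil m d_gt0; have := leq_divM m d.
rewrite -divn_gt0 // in d_le_m; nia.
Qed.

Section PositionInjective.
Variables (T : eqType) (s t' n : nat) (A : 'M[T]_(s, t'.+1)) (M : 'M[T]_(s, n)).
Local Notation t := t'.+1.
Variable C : {set {ffun 'I_t -> 'I_n}}.
Hypothesis C_copy : forall f, f \in C -> is_copy A M f.
Hypothesis C_inj : forall j, {in C &, injective (fun f : {ffun 'I_t -> 'I_n} => f j)}.

Lemma exp_card_le_copies : #|C| ^ t <= (2 * t) ^ t * #|copies A M|.
Proof.
have C_le_copies : #|C| <= #|copies A M|.
  by apply/subset_leq_card/subsetP => f /C_copy; rewrite inE.
have [C_lt_t | t_le_C] := ltnP #|C| t.
  have [-> | C_gt0] := posnP #|C|; first by rewrite exp0n.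
  rewrite -[X in X <= _]muln1 leq_mul // ?(leq_trans C_gt0 C_le_copies) //.
  by rewrite leq_exp2r //; lia.
apply: leq_trans (_ : (2 * t * (#|C| %/ t)) ^ t <= _).
  by rewrite leq_exp2r // leq_double_divn.
by rewrite expnMn leq_mul2l (exp_le_card_copies C_copy C_inj (leq_divM _ _)) orbT.
Qed.

End PositionInjective.

Lemma incr_sel_leq t n (f : {ffun 'I_t -> 'I_n}) : incr_sel f -> t <= n.
Proof.
move=> incr; rewrite -[t]card_ord -[n]card_ord.
apply: (@leq_card _ _ f) => j1 j2 eq_f.
have lt_f (i1 i2 : 'I_t) : i1 < i2 -> f i1 < f i2.
  by move: incr => /forallP/(_ i1)/forallP/(_ i2)/implyP.
by apply: ord_inj; case: (ltngtP j1 j2) => // /lt_f; rewrite eq_f ltnn.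
Qed.

Lemma exists_position_injective_sels t' n :
  exists C : {set {ffun 'I_t'.+1 -> 'I_n}},
    [/\ #|C| = n %/ t'.+1, forall f, f \in C -> incr_sel f
      & forall j, {in C &, injective (fun f : {ffun 'I_t'.+1 -> 'I_n} => f j)}].
Proof.
set t := t'.+1; set q := n %/ t.
have lt_n (b : 'I_q) (j : 'I_t) : b * t + j < n.
  have := leq_mul (ltn_ord b) (leqnn t); have := leq_divM n t; have := ltn_ord j.
  rewrite mulSn; lia.
pose sel (b : 'I_q) : {ffun 'I_t -> 'I_n} := [ffun j => Ordinal (lt_n b j)].
have selE b j : sel b j = b * t + j :> nat by rewrite ffunE.
have sel_inj j : injective (fun b => sel b j).
  move=> b1 b2 /(congr1 val); rewrite /= !selE => /addIn/eqP.
  by rewrite eqn_pmul2r // => /eqP/ord_inj.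
exists [set sel b | b in 'I_q]; split.
- rewrite card_imset ?card_ord // => b1 b2 eq_sel.
  by apply: (sel_inj ord0); rewrite /= eq_sel.
- move=> _ /imsetP[b _ ->]; apply/forallP => j1; apply/forallP => j2.
  by rewrite !selE ltn_add2l implybb.
- by move=> j _ _ /imsetP[b1 _ ->] /imsetP[b2 _ ->] /sel_inj ->.
Qed.

Lemma exp_le_copies_no_rows (T : eqType) t' n
    (A : 'M[T]_(0, t'.+1)) (M : 'M[T]_(0, n)) :
  t'.+1 <= n -> n ^ t'.+1 <= (2 * t'.+1) ^ (t'.+1 + t'.+1) * #|copies A M|.
Proof.
move=> t_le_n; have [C [card_C C_incr C_inj]] := exists_position_injective_sels t' n.
have C_copy f : f \in C -> is_copy A M f.
  by move=> /C_incr incr; apply/andP; split=> //; apply/forallP => -[].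
apply: leq_trans (_ : (2 * t'.+1 * (n %/ t'.+1)) ^ t'.+1 <= _).
  by rewrite leq_exp2r // leq_double_divn.
by rewrite expnMn expnD -mulnA leq_mul2l -card_C exp_card_le_copies ?orbT.
Qed.

Lemma pairwise_disjoint_position_inj s' t n (C : {set {ffun 'I_t -> 'I_n}}) :
  pairwise_disjoint s'.+1 C ->
  forall j, {in C &, injective (fun f : {ffun 'I_t -> 'I_n} => f j)}.
Proof.
move=> C_disj j f g fC gC /= eq_fg; case: (eqVneq f g) => // neq_fg.
have entry_f : (ord0, f j) \in copy_entries s'.+1 f by apply/imset2P; exists ord0 j.
have entry_g : (ord0, f j) \in copy_entries s'.+1 g.
  by rewrite eq_fg; apply/imset2P; exists ord0 j.
by rewrite (disjointFr (C_disj f g fC gC neq_fg) entry_f) in entry_g.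
Qed.

Lemma exp_length_or_card_le_copies (T : eqType) s t n (A : 'M[T]_(s, t)) (M : 'M[T]_(s, n))
    (C : {set {ffun 'I_t -> 'I_n}}) :
  (forall f, f \in C -> is_copy A M f) -> pairwise_disjoint s C ->
  n ^ t <= (2 * t) ^ (t + t) * #|copies A M| \/
  #|C| ^ t <= (2 * t) ^ (t + t) * #|copies A M|.
Proof.
case: t A M C => [|t'] A M C C_copy C_disj.
  left; rewrite mul1n card_gt0; apply/set0Pn.
  have /card_gt0P[f _] : 0 < #|{ffun 'I_0 -> 'I_n}| by rewrite card_ffun !card_ord.
  exists f; rewrite inE; apply/andP; split; first by apply/forallP => -[].
  by apply/forallP => i; apply/forallP => -[].
have [-> | [f fC]] := set_0Vmem C; first by right; rewrite cards0 exp0n.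
case: s A M C C_copy C_disj fC => [|s'] A M C C_copy C_disj fC.
  left; apply: exp_le_copies_no_rows; apply: (@incr_sel_leq _ _ f).
  by case/andP: (C_copy f fC).
have C_inj := pairwise_disjoint_position_inj C_disj.
right; apply: leq_trans (exp_card_le_copies C_copy C_inj) _.
by rewrite leq_mul2r expnD leq_pmulr ?orbT // expn_gt0 muln_gt0.
Qed.

Import Order.TTheory GRing.Theory Num.Theory.
Local Open Scope ring_scope.

Lemma scaled_exp_le (R : realFieldType) (K t n c Q : nat) (eps : R) :
  0 < eps -> eps * n%:R <= c%:R ->
  (n ^ t <= K * Q)%N \/ (c ^ t <= K * Q)%N ->
  n%:R ^+ t <= K%:R * (eps^-1 ^+ t + 1) * Q%:R.
Proof.
move=> eps_gt0 eps_n_le_c KQ_bound.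
have x_ge0 : 0 <= eps^-1 ^+ t by rewrite exprn_ge0 // invr_ge0 ltW.
have KQ_ge0 : 0 <= K%:R * Q%:R :> R by rewrite -natrM ler0n.
case: KQ_bound => [n_le | c_le].
  have : n%:R ^+ t <= K%:R * Q%:R :> R by rewrite -natrX -natrM ler_nat.
  nra.
have eps_n_le : (eps * n%:R) ^+ t <= K%:R * Q%:R.
  apply: le_trans (_ : c%:R ^+ t <= _); last by rewrite -natrX -natrM ler_nat.
  by rewrite lerXn2r // nnegrE ?ler0n // mulr_ge0 ?ler0n // ltW.
have -> : n%:R ^+ t = eps^-1 ^+ t * (eps * n%:R) ^+ t.
  by rewrite -exprMn mulrA mulVf ?mul1r // gt_eqF.
have := ler_wpM2l x_ge0 eps_n_le; nra.
Qed.

Theorem mainTheorem7 (R : realFieldType) (T : eqType) (s t : nat) (A : 'M[T]_(s, t)) :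
  exists p : {poly R},
    (forall x : R, 0 < x -> 0 < p.[x]) /\
    forall (eps : R), 0 < eps ->
    forall (n : nat) (M : 'M[T]_(s, n)),
      (exists C : {set {ffun 'I_t -> 'I_n}},
         (forall f, f \in C -> is_copy A M f) /\
         pairwise_disjoint s C /\
         eps * n%:R <= (#|C|)%:R) ->
      (p.[eps^-1])^-1 * (n%:R) ^+ t <= (#|copies A M|)%:R.
Proof.
set K := ((2 * t) ^ (t + t))%N.
exists (K%:R%:P * ('X^t + 1)).
have horner_p (x : R) : (K%:R%:P * ('X^t + 1)).[x] = K%:R * (x ^+ t + 1).
  by rewrite !hornerE.
have p_gt0 (x : R) : 0 < x -> 0 < (K%:R%:P * ('X^t + 1)).[x].
  move=> x_gt0; rewrite horner_p mulr_gt0 //; first by rewrite ltr0n expn_gt0; case: (t).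
  exact: ltr_wpDl (exprn_ge0 _ (ltW x_gt0)) ltr01.
split=> // eps eps_gt0 n M [C [C_copy [C_disj eps_n_le]]].
rewrite ler_pdivrMl ?p_gt0 ?invr_gt0 // horner_p.
exact: scaled_exp_le eps_gt0 eps_n_le (exp_length_or_card_le_copies C_copy C_disj).
Qed.
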